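(* Let $L$ be the generator (domain $D(L)$) of a conservative Markov process with stationary distribution $\nu$, and $\mathcal{E}(f,g)=-\int Lf\cdot g\,d\nu$. Let $f,g\in D(L)$ satisfy $\mathcal{E}(f,f)\mathcal{E}(g,g)>0$ and $\check{\mathcal{E}}(f,g):=(\mathcal{E}(f,g)-\mathcal{E}(g,f))/2>0$. Put $\tilde{\mathcal{E}}(f,g)=(\mathcal{E}(f,g)+\mathcal{E}(g,f))/2$ and $\Delta(f,g)=\mathcal{E}(f,f)\mathcal{E}(g,g)-\tilde{\mathcal{E}}(f,g)^2$. Then $\Delta(f,g)\ge0$ and $$\mathrm{Sect}(\mathcal{E})^2-1\ge\begin{cases}\check{\mathcal{E}}(f,g)^2/\Delta(f,g)&\text{if }\mathcal{E}(f,f)\mathcal{E}(g,g)\ne\mathcal{E}(f,g)\tilde{\mathcal{E}}(f,g)\text{ and }\Delta(f,g)>0,\\ \infty&\text{if }\mathcal{E}(f,f)\mathcal{E}(g,g)\ne\mathcal{E}(f,g)\tilde{\mathcal{E}}(f,g)\text{ and }\Delta(f,g)=0,\\ \check{\mathcal{E}}(f,g)/\tilde{\mathcal{E}}(f,g)&\text{if }\mathcal{E}(f,f)\mathcal{E}(g,g)=\mathcal{E}(f,g)\tilde{\mathcal{E}}(f,g).\end{cases}$$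
   Context: $\mathrm{Sect}(\mathcal{E})$ is the infimum of all finite $C$ such that $\mathcal{E}(f,g)\le C\mathcal{E}(f,f)^{1/2}\mathcal{E}(g,g)^{1/2}$ for all $f,g\in D(L)$, and $=\infty$ if no such $C$ exists. *)

From HB Require Import structures.
From mathcomp Require Import all_boot all_order all_algebra.
From mathcomp Require Import all_classical all_reals all_analysis.
Set Implicit Arguments. Unset Strict Implicit. Unset Printing Implicit Defensive.
Import Order.TTheory GRing.Theory Num.Theory.
Import numFieldNormedType.Exports.
Local Open Scope classical_set_scope.
Local Open Scope ring_scope.

Definition markov_semigroup (R : realType) (d : measure_display)
  (T : measurableType d) (nu : probability T R) (P : R -> R.-pker T ~> T) :=
  [/\ (forall x A, measurable A -> P 0 x A = \d_x A),
      (forall s t, 0 <= s -> 0 <= t -> forall x A, measurable A ->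
          P (s + t) x A = (\int[P s x]_y (P t y A)%E)%E) &
      (forall t, 0 <= t -> forall A, measurable A ->
          (\int[nu]_x (P t x A)%E)%E = nu A)].

Definition sgact (R : realType) (d : measure_display) (T : measurableType d)
  (P : R -> R.-pker T ~> T) (t : R) (f : T -> R) (x : T) : R :=
  fine (\int[P t x]_y (f y)%:E).

Definition L2 (R : realType) (d : measure_display) (T : measurableType d)
  (nu : probability T R) (f : T -> R) :=
  measurable_fun setT f /\ nu.-integrable setT (fun x => (f x ^+ 2)%:E).

Definition gen_conv (R : realType) (d : measure_display) (T : measurableType d)
  (nu : probability T R) (P : R -> R.-pker T ~> T) (f g : T -> R) :=
  (fun t : R => (\int[nu]_x
     ((((sgact P t f x - f x) / t - g x) ^+ 2)%:E))%E) @ 0^'+ --> 0%E.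

Definition is_generator (R : realType) (d : measure_display)
  (T : measurableType d) (nu : probability T R) (P : R -> R.-pker T ~> T)
  (D : set (T -> R)) (L : (T -> R) -> (T -> R)) :=
  (forall f, D f -> [/\ L2 nu f, L2 nu (L f) & gen_conv nu P f (L f)]) /\
  (forall f g, L2 nu f -> L2 nu g -> gen_conv nu P f g -> D f).

Definition Dform (R : realType) (d : measure_display) (T : measurableType d)
  (nu : probability T R) (L : (T -> R) -> (T -> R)) (f g : T -> R) : R :=
  - Rintegral nu setT (fun x => L f x * g x).

(* Sect(E) = inf of all finite C with E(f,g) <= C E(f,f)^(1/2) E(g,g)^(1/2)
   for all f,g in D(L); +oo if there is no such C. *)
Definition Sect (R : realType) (d : measure_display) (T : measurableType d)
  (nu : probability T R) (D : set (T -> R)) (L : (T -> R) -> (T -> R))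
  : \bar R :=
  ereal_inf (EFin @` [set C : R | forall f g, D f -> D g ->
     Dform nu L f g <= C * Num.sqrt (Dform nu L f f) * Num.sqrt (Dform nu L g g)]).

From HB Require Import structures.
From mathcomp Require Import all_boot all_order all_algebra.
From mathcomp Require Import all_classical all_reals all_analysis.
From mathcomp Require Import measurable_realfun ring lra.
Set Implicit Arguments. Unset Strict Implicit. Unset Printing Implicit Defensive.
Import Order.TTheory GRing.Theory Num.Theory.
Import numFieldNormedType.Exports.
Local Open Scope classical_set_scope.
Local Open Scope ring_scope.

(* Stationarity and Jensen's inequality make every [P_t] a contraction of
   [L2(nu)], so [<(P_t h - h) / t, h> <= 0] and, letting [t -> 0+],
   [E(h, h) >= 0].  As [E] is bilinear on [D(L)], it is a nonnegative quadratic
   form on [span(f, g)], whence [Delta >= 0].  The bounds on [Sect] come from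
   testing the sector inequality on a pair [(u, g)] with [u] in this span: when
   [Delta > 0] the ratio [E(u, g) / sqrt(E(u, u) E(g, g))] reaches
   [sqrt(1 + Echk^2 / Delta)]; when [Delta = 0] some [u] has
   [E(u, u) = 0 < E(u, g)], so that no finite constant works.  In the last case
   [Delta = Echk Etil], which reduces it to the first one. *)

Section stationary_kernel.
Local Open Scope ereal_scope.
Context (R : realType) (d : measure_display) (T : measurableType d)
  (nu : probability T R) (k : R.-pker T ~> T).
Hypothesis k_stationary : forall A, measurable A -> \int[nu]_x k x A = nu A.

(* [nu] is the composite of the constant kernel [nu] with [k], so the
   library's [integral_kcomp] applies. *)
Let cst_nu (_ : unit) : {measure set T -> \bar R} := nu.
Let measurable_cst_nu U : measurable U -> measurable_fun [set: unit] (cst_nu ^~ U).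
Proof. by move=> _; exact: (measurable_cst (nu U)). Qed.
HB.instance Definition _ := isKernel.Build _ _ _ _ _ cst_nu measurable_cst_nu.
Let cst_nu_prob x : cst_nu x [set: T] = 1. Proof. exact: probability_setT. Qed.
HB.instance Definition _ := Kernel_isProbability.Build _ _ _ _ _ cst_nu cst_nu_prob.

Let k_snd (p : unit * T) : {measure set T -> \bar R} := k p.2.
Let measurable_k_snd U : measurable U -> measurable_fun [set: unit * T] (k_snd ^~ U).
Proof. by move=> mU; exact: measurableT_comp (measurable_kernel k U mU) _. Qed.
HB.instance Definition _ := isKernel.Build _ _ _ _ _ k_snd measurable_k_snd.
Let k_snd_prob p : k_snd p [set: T] = 1. Proof. exact: prob_kernel. Qed.
HB.instance Definition _ := Kernel_isProbability.Build _ _ _ _ _ k_snd k_snd_prob.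

Lemma ge0_integral_stationary (f : T -> \bar R) : (forall x, 0 <= f x) ->
  measurable_fun [set: T] f -> \int[nu]_x f x = \int[nu]_x \int[k x]_y f y.
Proof.
move=> f0 mf; rewrite -[RHS](integral_kcomp cst_nu k_snd tt f0 mf).
by apply: eq_measure_integral => A mA _; exact/esym/k_stationary.
Qed.

End stationary_kernel.

Section real_valued_integrals.
Context (R : realType) (d : measure_display) (T : measurableType d)
  (mu : measure T R).

Lemma integrableZ_EFin (c : R) (F : T -> R) :
  mu.-integrable [set: T] (EFin \o F) ->
  mu.-integrable [set: T] (EFin \o (fun x => c * F x)).
Proof. exact: integrableZl. Qed.

Lemma integrableD_EFin (F G : T -> R) :
  mu.-integrable [set: T] (EFin \o F) -> mu.-integrable [set: T] (EFin \o G) ->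
  mu.-integrable [set: T] (EFin \o (fun x => F x + G x)).
Proof. exact: integrableD. Qed.

Lemma Rintegral_lincomb (a b : R) (F G : T -> R) :
  mu.-integrable [set: T] (EFin \o F) -> mu.-integrable [set: T] (EFin \o G) ->
  \int[mu]_x (a * F x + b * G x) = a * \int[mu]_x F x + b * \int[mu]_x G x.
Proof.
move=> iF iG; rewrite RintegralD //; try exact: integrableZ_EFin.
by rewrite !RintegralZl.
Qed.

End real_valued_integrals.

Section probability_square.
Context (R : realType) (d : measure_display) (T : measurableType d)
  (mu : measure T R).
Hypothesis mu_setT : mu [set: T] = 1%E.

Let integrable_one : mu.-integrable [set: T] (fun _ => 1%:E).
Proof.
apply/integrableP; split; first exact: measurable_cst.
under eq_integral do rewrite abse1.
by rewrite integral_cst// mu_setT mul1e ltry.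
Qed.

Lemma integrable_of_sqr (f : T -> R) : measurable_fun [set: T] f ->
  mu.-integrable [set: T] (fun x => (f x ^+ 2)%:E) ->
  mu.-integrable [set: T] (EFin \o f).
Proof.
move=> mf intf2.
apply: (@le_integrable _ _ _ _ _ measurableT _ (fun x => (1 + f x ^+ 2)%:E)).
- exact/measurable_EFinP.
- move=> x _ /=; rewrite lee_fin (@ger0_norm _ (1 + _)) ?addr_ge0 ?sqr_ge0//.
  rewrite -(ger0_norm (sqr_ge0 (f x))) normrX.
  have := normr_ge0 (f x); nra.
- by under eq_fun do rewrite EFinD; exact: integrableD.
Qed.

Lemma sqr_integral_le (f : T -> R) : measurable_fun [set: T] f ->
  ((fine (\int[mu]_x (f x)%:E) ^+ 2)%:E <= \int[mu]_x (f x ^+ 2)%:E)%E.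
Proof.
move=> mf.
have mf2 : measurable_fun [set: T] (fun x => (f x ^+ 2)%:E).
  by apply/measurable_EFinP; exact: measurable_funX.
have [fin|inf] := ltP (\int[mu]_x (f x ^+ 2)%:E)%E +oo%E; last first.
  by rewrite (@le_trans _ _ +oo%E) ?leey.
have if2 : mu.-integrable [set: T] (fun x => (f x ^+ 2)%:E).
  apply/integrableP; split => //.
  under eq_integral do rewrite gee0_abs ?lee_fin ?sqr_ge0//.
  exact: fin.
have if1 := integrable_of_sqr mf if2.
set m := fine _.
have hm : (\int[mu]_x (f x)%:E)%E = m%:E.
  by rewrite fineK //; exact: (integrable_fin_num measurableT if1).
(* [m^2 = int (2 m f - m^2)] and [2 m f - m^2 <= f^2] pointwise *)
have -> : ((m ^+ 2)%:E = \int[mu]_x ((2 * m)%:E * (f x)%:E + (- m ^+ 2)%:E * 1%:E))%E.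
  rewrite integralD //; try by apply: integrableZl.
  rewrite integralZl // integralZl // integral_cst// mu_setT hm -!EFinM -EFinD.
  by congr EFin; ring.
apply: le_integral => //; first by apply: integrableD => //; apply: integrableZl.
move=> x _; rewrite mule1 -EFinM -EFinD lee_fin.
have := sqr_ge0 (f x - m); rewrite sqrrB; lra.
Qed.

End probability_square.

Section real_inequalities.
Variable R : realFieldType.

Lemma le0_of_le_div (x c : R) : 0 <= c ->
  (forall lam, 0 < lam -> x <= c / lam) -> x <= 0.
Proof.
move=> c0 xle; apply/ler_addgt0Pr => e e0; rewrite add0r.
have lam0 : 0 < (c + 1) / e by rewrite divr_gt0 // ltr_wpDl.
apply: (le_trans (xle _ lam0)).
have -> : c / ((c + 1) / e) = e * (c / (c + 1)).
  by field; rewrite (gt_eqF e0) gt_eqF // ltr_wpDl.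
by rewrite -[leRHS]mulr1 ler_pM2l// ler_pdivrMr ?ltr_wpDl// mul1r lerDl.
Qed.

(* With [s = h + t q], the gap between the two sides is
   [(lam (q - l) + h)^2 / (2 lam) + t q^2 / 2]. *)
Lemma mul_le_diff_quot (t lam l h s : R) : 0 < t -> 0 < lam ->
  l * h + (2 * t)^-1 * h ^+ 2 <=
  lam / 2 * ((s - h) / t - l) ^+ 2 + (2 * lam)^-1 * h ^+ 2 + (2 * t)^-1 * s ^+ 2.
Proof.
move=> t0 lam0; set q := (s - h) / t.
have -> : s = h + q * t by rewrite /q divfK ?gt_eqF//; ring.
rewrite -subr_ge0.
have -> : lam / 2 * (q - l) ^+ 2 + (2 * lam)^-1 * h ^+ 2 + (2 * t)^-1 * (h + q * t) ^+ 2
    - (l * h + (2 * t)^-1 * h ^+ 2)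
    = (lam * (q - l) + h) ^+ 2 / (2 * lam) + (q * t) ^+ 2 / (2 * t).
  by field; rewrite !gt_eqF.
by rewrite addr_ge0 // divr_ge0 ?sqr_ge0 // mulr_ge0 // ltW.
Qed.

End real_inequalities.

Section Gram_form.
Variables (R : numFieldType) (F A B G : R).

(* [gram2 a b c e = E(a f + b g, c f + e g)] for a bilinear form [E] whose
   values on [(f, f), (f, g), (g, f), (g, g)] are [F, A, B, G]. *)
Definition gram2 (a b c e : R) := a * c * F + a * e * A + b * c * B + b * e * G.

Let Etil := (A + B) / 2.
Let Delta := F * G - Etil ^+ 2.
Let Echk := (A - B) / 2.

Lemma gram2_Delta : gram2 G (- Etil) G (- Etil) = G * Delta.
Proof. by rewrite /gram2 /Delta /Etil; field. Qed.

Lemma gram2_gg : gram2 0 1 0 1 = G.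
Proof. by rewrite /gram2; ring. Qed.

Section nondegenerate.
Hypotheses (G_neq0 : G != 0) (Delta_neq0 : Delta != 0).
Let y := Echk * G / Delta.
Let z := 1 - y * Etil / G.

(* [field] reduces the side condition [Delta != 0] to this form. *)
Let Delta4_neq0 : F * G * 4 - (A + B) ^+ 2 != 0.
Proof.
have -> : F * G * 4 - (A + B) ^+ 2 = 4 * Delta by rewrite /Delta /Etil; field.
by rewrite mulf_neq0.
Qed.

Lemma gram2_witness : gram2 y z y z = G * (1 + Echk ^+ 2 / Delta).
Proof.
by rewrite /gram2 /z /y /Echk /Delta /Etil; field; rewrite Delta4_neq0 G_neq0.
Qed.

Lemma gram2_witness_g : gram2 y z 0 1 = G * (1 + Echk ^+ 2 / Delta).
Proof.
by rewrite /gram2 /z /y /Echk /Delta /Etil; field; rewrite Delta4_neq0 G_neq0.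
Qed.

End nondegenerate.

Lemma gram2_proj : G != 0 -> gram2 1 (- (Etil / G)) 1 (- (Etil / G)) = Delta / G.
Proof. by move=> G_neq0; rewrite /gram2 /Delta /Etil; field. Qed.

Lemma gram2_proj_g : G != 0 -> gram2 1 (- (Etil / G)) 0 1 = Echk.
Proof. by move=> G_neq0; rewrite /gram2 /Echk /Etil; field. Qed.

End Gram_form.

Section semigroup_L2.
Context (R : realType) (d : measure_display) (T : measurableType d)
  (nu : probability T R) (P : R -> R.-pker T ~> T).
Hypothesis P_stationary : forall t, 0 <= t -> forall A, measurable A ->
  (\int[nu]_x P t x A)%E = nu A.

Lemma measurable_EFin_sqr (f : T -> R) : measurable_fun [set: T] f ->
  measurable_fun [set: T] (fun x => (f x ^+ 2)%:E).
Proof. by move=> mf; apply/measurable_EFinP; exact: measurable_funX. Qed.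

Lemma L2_integrable f : L2 nu f -> nu.-integrable [set: T] (EFin \o f).
Proof. by case=> mf if2; apply: integrable_of_sqr => //; exact: probability_setT. Qed.

Lemma L2_integral_sqrE f : L2 nu f ->
  (\int[nu]_x (f x ^+ 2)%:E)%E = (\int[nu]_x (f x ^+ 2))%:E.
Proof. by case=> _ if2; rewrite fineK // (integrable_fin_num measurableT if2). Qed.

Lemma L2_lincomb a b f g : L2 nu f -> L2 nu g ->
  L2 nu (fun x => a * f x + b * g x).
Proof.
move=> [mf if2] [mg ig2]; have mh : measurable_fun [set: T] (fun x => a * f x + b * g x).
  by apply: measurable_funD; apply: measurable_funM => //; exact: measurable_cst.
split => //.
apply: (@le_integrable _ _ _ _ _ measurableT _
  (fun x => ((2 * a ^+ 2)%:E * (f x ^+ 2)%:E + (2 * b ^+ 2)%:E * (g x ^+ 2)%:E)%E)).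
- exact: measurable_EFin_sqr.
- move=> x _; rewrite -!EFinM -EFinD !abse_EFin lee_fin.
  rewrite (ger0_norm (sqr_ge0 _)) ger0_norm; last first.
    by have := sqr_ge0 a; have := sqr_ge0 b; have := sqr_ge0 (f x);
       have := sqr_ge0 (g x); nra.
  have := sqr_ge0 (a * f x - b * g x); nra.
- by apply: integrableD => //; apply: integrableZl.
Qed.

Lemma L2_sub f g : L2 nu f -> L2 nu g -> L2 nu (fun x => f x - g x).
Proof.
move=> Lf Lg; have := L2_lincomb 1 (-1) Lf Lg.
by under eq_fun do rewrite mul1r mulN1r.
Qed.

Lemma L2_integrable_mul f g : L2 nu f -> L2 nu g ->
  nu.-integrable [set: T] (EFin \o (fun x => f x * g x)).
Proof.
move=> [mf if2] [mg ig2].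
apply: (@le_integrable _ _ _ _ _ measurableT _
  (fun x => ((f x ^+ 2)%:E + (g x ^+ 2)%:E)%E)).
- by apply/measurable_EFinP; exact: measurable_funM.
- move=> x _; rewrite -EFinD !abse_EFin lee_fin.
  rewrite (@ger0_norm _ (_ + _)) ?addr_ge0 ?sqr_ge0// normrM.
  rewrite -(real_normK (num_real (f x))) -(real_normK (num_real (g x))).
  have := sqr_ge0 (`|f x| - `|g x|); nra.
- exact: integrableD.
Qed.

Lemma measurable_sgact t f : measurable_fun [set: T] f ->
  measurable_fun [set: T] (sgact P t f).
Proof.
move=> mf; apply: measurableT_comp; first exact: (fine_measurable measurableT).
under eq_fun do rewrite integralE.
have mk U : measurable U -> measurable_fun [set: T] (P t ^~ U).
  by move=> mU; exact: (measurable_kernel (P t) _ mU).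
have mfE : measurable_fun [set: T] (EFin \o f) by exact/measurable_EFinP.
by apply: emeasurable_funB; apply: measurable_fun_integral_kernel => //;
  [exact: measurable_funepos | exact: measurable_funeneg].
Qed.

(* [int_x int |f| dP_t(x) dnu = int |f| dnu < oo], so the inner integral is
   finite almost everywhere. *)
Lemma ae_kernel_integrable t f : 0 <= t -> L2 nu f ->
  \forall x \ae nu, (P t x).-integrable [set: T] (EFin \o f).
Proof.
move=> t0 Lf; have [mf _] := Lf.
have mabs : measurable_fun [set: T] (fun y => (`|f y|)%:E).
  by apply/measurable_EFinP; exact: measurableT_comp.
have iabs : nu.-integrable [set: T] (fun x => \int[P t x]_y (`|f y|)%:E)%E.
  apply/integrableP; split.
    apply: measurable_fun_integral_kernel => // U mU.
    exact: (measurable_kernel (P t) _ mU).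
  under eq_integral do rewrite gee0_abs ?integral_ge0//.
  rewrite -ge0_integral_stationary //; last exact: P_stationary.
  by case/integrableP: (L2_integrable Lf).
apply: filterS (integrable_ae measurableT iabs) => x /(_ I) fx.
apply/integrableP; split; first exact/measurable_EFinP.
by rewrite -ge0_fin_numE //; apply: integral_ge0.
Qed.

Lemma sgact_lincomb t a b f g : 0 <= t -> L2 nu f -> L2 nu g ->
  \forall x \ae nu, sgact P t (fun y => a * f y + b * g y) x
     = a * sgact P t f x + b * sgact P t g x.
Proof.
move=> t0 Lf Lg.
apply: filterS2 (ae_kernel_integrable t0 Lf) (ae_kernel_integrable t0 Lg).
move=> x iff ig; rewrite /sgact.
under eq_integral do rewrite EFinD !EFinM.
rewrite integralD //; try exact: integrableZl.
rewrite !integralZl // -(fineK (integrable_fin_num measurableT iff)).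
by rewrite -(fineK (integrable_fin_num measurableT ig)).
Qed.

(* Jensen's inequality in each [P_t(x, .)], then stationarity. *)
Lemma integral_sqr_sgact_le t f : 0 <= t -> L2 nu f ->
  (\int[nu]_x (sgact P t f x ^+ 2)%:E <= \int[nu]_x (f x ^+ 2)%:E)%E.
Proof.
move=> t0 [mf if2].
rewrite [X in (_ <= X)%E](ge0_integral_stationary (P_stationary t0)); last 2 first.
- by move=> z; rewrite lee_fin sqr_ge0.
- exact: measurable_EFin_sqr.
apply: ge0_le_integral => //.
- by move=> x _; rewrite lee_fin sqr_ge0.
- exact: measurable_EFin_sqr (measurable_sgact t mf).
- apply: measurable_fun_integral_kernel.
  + by move=> U mU; exact: (measurable_kernel (P t) _ mU).
  + by move=> z; rewrite lee_fin sqr_ge0.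
  + exact: measurable_EFin_sqr.
- by move=> x _; apply: sqr_integral_le => //; exact: prob_kernel.
Qed.

Lemma L2_sgact t f : 0 <= t -> L2 nu f -> L2 nu (sgact P t f).
Proof.
move=> t0 Lf; have [mf if2] := Lf; split; first exact: measurable_sgact.
apply/integrableP; split; first exact: measurable_EFin_sqr (measurable_sgact t mf).
under eq_integral do rewrite gee0_abs ?lee_fin ?sqr_ge0//.
apply: le_lt_trans (integral_sqr_sgact_le t0 Lf) _.
by case/integrableP: if2 => _; under eq_integral do rewrite gee0_abs ?lee_fin ?sqr_ge0//.
Qed.

End semigroup_L2.

Section generator_L2.
Context (R : realType) (d : measure_display) (T : measurableType d)
  (nu : probability T R) (P : R -> R.-pker T ~> T).
Hypothesis P_stationary : forall t, 0 <= t -> forall A, measurable A ->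
  (\int[nu]_x P t x A)%E = nu A.

Definition diff_quot t (f : T -> R) x := (sgact P t f x - f x) / t.

Lemma measurable_diff_quot t f : measurable_fun [set: T] f ->
  measurable_fun [set: T] (diff_quot t f).
Proof.
move=> mf; apply: measurable_funM; last exact: measurable_cst.
by apply: measurable_funB => //; exact: measurable_sgact.
Qed.

Lemma measurable_sqr_diff_quot_sub t (h l : T -> R) : measurable_fun [set: T] h ->
  measurable_fun [set: T] l ->
  measurable_fun [set: T] (fun x => (diff_quot t h x - l x) ^+ 2).
Proof.
move=> mh ml; apply: measurable_funX; apply: measurable_funB => //.
exact: measurable_diff_quot.
Qed.

Lemma L2_diff_quot t f : 0 < t -> L2 nu f -> L2 nu (diff_quot t f).
Proof.
move=> t0 Lf.
have -> : diff_quot t f = (fun x => t^-1 * sgact P t f x + - t^-1 * f x).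
  by apply/funext => x; rewrite /diff_quot mulrC mulrBr mulNr.
exact: L2_lincomb (L2_sgact P_stationary (ltW t0) Lf) Lf.
Qed.

Lemma ge0_integral_lincomb (a b : R) (F G : T -> R) : 0 <= a -> 0 <= b ->
  (forall x, 0 <= F x) -> (forall x, 0 <= G x) ->
  measurable_fun [set: T] F -> measurable_fun [set: T] G ->
  (\int[nu]_x ((a * F x + b * G x)%:E) =
   a%:E * \int[nu]_x (F x)%:E + b%:E * \int[nu]_x (G x)%:E)%E.
Proof.
move=> a0 b0 F0 G0 mF mG.
have mF' : measurable_fun [set: T] (EFin \o F) by exact/measurable_EFinP.
have mG' : measurable_fun [set: T] (EFin \o G) by exact/measurable_EFinP.
under eq_integral do rewrite EFinD !EFinM.
rewrite ge0_integralD //; last 4 first.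
- by move=> x _; rewrite mule_ge0 // lee_fin.
- by apply: emeasurable_funM => //; exact: measurable_cst.
- by move=> x _; rewrite mule_ge0 // lee_fin.
- by apply: emeasurable_funM => //; exact: measurable_cst.
by rewrite !ge0_integralZl // => x _; rewrite lee_fin.
Qed.

Lemma integral_sqr_diff_quot_lincomb_le t a b f g lf lg : 0 < t ->
  L2 nu f -> L2 nu g -> measurable_fun [set: T] lf -> measurable_fun [set: T] lg ->
  (\int[nu]_x ((diff_quot t (fun y => a * f y + b * g y) x
                 - (a * lf x + b * lg x)) ^+ 2)%:E <=
   (2 * a ^+ 2)%:E * \int[nu]_x ((diff_quot t f x - lf x) ^+ 2)%:E +
   (2 * b ^+ 2)%:E * \int[nu]_x ((diff_quot t g x - lg x) ^+ 2)%:E)%E.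
Proof.
move=> t0 Lf Lg mlf mlg; have [mf _] := Lf; have [mg _] := Lg.
have mh : measurable_fun [set: T] (fun x => a * f x + b * g x).
  by apply: measurable_funD; apply: measurable_funM => //; exact: measurable_cst.
have mlh : measurable_fun [set: T] (fun x => a * lf x + b * lg x).
  by apply: measurable_funD; apply: measurable_funM => //; exact: measurable_cst.
have mdq := measurable_sqr_diff_quot_sub t.
rewrite -ge0_integral_lincomb; last 6 first.
- by rewrite mulr_ge0 // sqr_ge0.
- by rewrite mulr_ge0 // sqr_ge0.
- by move=> x; rewrite sqr_ge0.
- by move=> x; rewrite sqr_ge0.
- exact: mdq.
- exact: mdq.
apply: ae_ge0_le_integral => //.
- by move=> x _; rewrite lee_fin sqr_ge0.
- exact/measurable_EFinP/mdq.
- move=> x _; rewrite lee_fin.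
  by apply: addr_ge0; apply: mulr_ge0 (mulr_ge0 _ (sqr_ge0 _)) (sqr_ge0 _).
- apply/measurable_EFinP; apply: measurable_funD;
    by apply: measurable_funM; [exact: measurable_cst | exact: mdq].
have := sgact_lincomb P_stationary a b (ltW t0) Lf Lg; apply: filterS => x sgE _.
rewrite lee_fin /diff_quot sgE.
set u := (sgact P t f x - f x) / t - lf x.
set v := (sgact P t g x - g x) / t - lg x.
have -> : (a * sgact P t f x + b * sgact P t g x - (a * f x + b * g x)) / t -
    (a * lf x + b * lg x) = a * u + b * v.
  by rewrite /u /v; field; rewrite gt_eqF.
have := sqr_ge0 (a * u - b * v); nra.
Qed.

Lemma gen_conv_lincomb a b f g lf lg : L2 nu f -> L2 nu g -> L2 nu lf -> L2 nu lg ->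
  gen_conv nu P f lf -> gen_conv nu P g lg ->
  gen_conv nu P (fun x => a * f x + b * g x) (fun x => a * lf x + b * lg x).
Proof.
move=> Lf Lg [mlf _] [mlg _] cf cg.
apply: (@squeeze_cvge _ _ _ _ (fun=> 0%E) _
  (fun t => (2 * a ^+ 2)%:E * \int[nu]_x (((diff_quot t f x - lf x) ^+ 2)%:E) +
            (2 * b ^+ 2)%:E * \int[nu]_x (((diff_quot t g x - lg x) ^+ 2)%:E))%E).
- near=> t.
  have t0 : 0 < t by near: t; exact: nbhs_right_gt.
  rewrite integral_ge0 => [|x _]; last by rewrite lee_fin sqr_ge0.
  exact: integral_sqr_diff_quot_lincomb_le.
- exact: cvg_cst.
- rewrite (_ : 0%E = (2 * a ^+ 2)%:E * 0 + (2 * b ^+ 2)%:E * 0)%E.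
    by apply: cvgeD => //; apply: cvgeZl.
  by rewrite !mule0 adde0.
Unshelve. all: by end_near.
Qed.

(* Two [L2] limits [l1], [l2] of the difference quotients of [h] agree a.e.,
   since [(l1 - l2)^2 <= 2 (q - l1)^2 + 2 (q - l2)^2]. *)
Lemma gen_conv_Rintegral_unique h l1 l2 k : L2 nu h -> L2 nu l1 -> L2 nu l2 ->
  L2 nu k -> gen_conv nu P h l1 -> gen_conv nu P h l2 ->
  \int[nu]_x (l1 x * k x) = \int[nu]_x (l2 x * k x).
Proof.
move=> Lh L1 L2' Lk c1 c2.
have [mh _] := Lh; have [ml1 _] := L1; have [ml2 _] := L2'; have [mk _] := Lk.
have mw : measurable_fun [set: T] (fun x => ((l1 x - l2 x) ^+ 2)%:E).
  by apply: measurable_EFin_sqr; exact: measurable_funB.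
have W : (\int[nu]_x ((l1 x - l2 x) ^+ 2)%:E <= 0)%E.
  have cv : (fun t => 2%:E * \int[nu]_x (((diff_quot t h x - l1 x) ^+ 2)%:E) +
      2%:E * \int[nu]_x (((diff_quot t h x - l2 x) ^+ 2)%:E))%E @ 0^'+ -->
      (2%:E * 0 + 2%:E * 0)%E.
    by apply: cvgeD => //; apply: cvgeZl.
  rewrite !mule0 adde0 in cv.
  apply: (cvge_to_ge cv); near=> t.
  have mdq := measurable_sqr_diff_quot_sub t mh.
  rewrite -ge0_integral_lincomb //; last 4 first.
  + by move=> x; rewrite sqr_ge0.
  + by move=> x; rewrite sqr_ge0.
  + exact: mdq.
  + exact: mdq.
  apply: ge0_le_integral => //.
  + by move=> x _; rewrite lee_fin sqr_ge0.
  + apply/measurable_EFinP; apply: measurable_funD;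
      by apply: measurable_funM; [exact: measurable_cst | exact: mdq].
  + move=> x _; rewrite lee_fin.
    have := sqr_ge0 (diff_quot t h x - l1 x + (diff_quot t h x - l2 x)); nra.
have /(ae_eq_integral_abs nu measurableT mw) ae0 :
    (\int[nu]_x `|((l1 x - l2 x) ^+ 2)%:E| = 0)%E.
  under eq_integral do rewrite gee0_abs ?lee_fin ?sqr_ge0//.
  by apply/eqP; rewrite eq_le W integral_ge0// => x _; rewrite lee_fin sqr_ge0.
rewrite /Rintegral; congr fine; apply: ae_eq_integral => //.
- by apply/measurable_EFinP; exact: measurable_funM.
- by apply/measurable_EFinP; exact: measurable_funM.
- apply: filterS ae0 => x /(_ I) /(congr1 fine) /= /eqP.
  by rewrite sqrf_eq0 subr_eq0 => /eqP ->.
Unshelve. all: by end_near.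
Qed.

Lemma Rintegral_mul_le_diff_quot t lam h l : 0 < t -> 0 < lam ->
  L2 nu h -> L2 nu l ->
  \int[nu]_x (l x * h x) <=
  lam / 2 * \int[nu]_x ((diff_quot t h x - l x) ^+ 2) +
  (2 * lam)^-1 * \int[nu]_x (h x ^+ 2).
Proof.
move=> t0 lam0 Lh Ll.
have Ls := L2_sgact P_stationary (ltW t0) Lh.
have Lql := L2_sub (L2_diff_quot t0 Lh) Ll.
have S_le_H : \int[nu]_x (sgact P t h x ^+ 2) <= \int[nu]_x (h x ^+ 2).
  by rewrite -lee_fin -!L2_integral_sqrE //; exact: integral_sqr_sgact_le (ltW t0) Lh.
have i2 f : L2 nu f -> nu.-integrable [set: T] (EFin \o (fun x => f x ^+ 2)).
  by case.
have iZ c f : L2 nu f ->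
    nu.-integrable [set: T] (EFin \o (fun x => c * f x ^+ 2)).
  by move/i2; exact: integrableZ_EFin.
have ih := L2_integrable_mul Ll Lh.
have iu : nu.-integrable [set: T]
    (EFin \o (fun x => l x * h x + (2 * t)^-1 * h x ^+ 2)).
  exact: integrableD_EFin ih (iZ _ _ Lh).
have ir : nu.-integrable [set: T] (EFin \o (fun x =>
    lam / 2 * (diff_quot t h x - l x) ^+ 2 + (2 * lam)^-1 * h x ^+ 2
    + (2 * t)^-1 * sgact P t h x ^+ 2)).
  exact: integrableD_EFin (integrableD_EFin (iZ _ _ Lql) (iZ _ _ Lh)) (iZ _ _ Ls).
have := le_Rintegral measurableT iu ir
  (fun x _ => mul_le_diff_quot (l x) (h x) (sgact P t h x) t0 lam0).
rewrite !RintegralD //; try exact: iZ;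
  last exact: integrableD_EFin (iZ _ _ Lql) (iZ _ _ Lh).
rewrite !RintegralZl //; try exact: i2.
have c0 : 0 <= (2 * t)^-1 by rewrite invr_ge0 mulr_ge0 // ltW.
have := ler_wpM2l c0 S_le_H; lra.
Qed.

(* Letting [t -> 0+] and then [lam -> +oo] in the previous bound. *)
Lemma Rintegral_gen_conv_mul_le0 h l : L2 nu h -> L2 nu l -> gen_conv nu P h l ->
  \int[nu]_x (l x * h x) <= 0.
Proof.
move=> Lh Ll hl.
apply: (le0_of_le_div (c := 2^-1 * \int[nu]_x (h x ^+ 2))).
  by rewrite mulr_ge0 // Rintegral_ge0 // => x _; rewrite sqr_ge0.
move=> lam lam0; rewrite -lee_fin.
have cv : (fun t => (lam / 2)%:E * \int[nu]_x (((diff_quot t h x - l x) ^+ 2)%:E)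
    + ((2 * lam)^-1 * \int[nu]_x (h x ^+ 2))%:E)%E @ 0^'+ -->
    ((lam / 2)%:E * 0 + ((2 * lam)^-1 * \int[nu]_x (h x ^+ 2))%:E)%E.
  by apply: cvgeD => //; [apply: cvgeZl | exact: cvg_cst].
rewrite mule0 add0e in cv.
have -> : 2^-1 * \int[nu]_x (h x ^+ 2) / lam = (2 * lam)^-1 * \int[nu]_x (h x ^+ 2).
  by rewrite invfM mulrAC.
apply: (cvge_to_ge cv); near=> t.
have t0 : 0 < t by near: t; exact: nbhs_right_gt.
have Lql := L2_sub (L2_diff_quot t0 Lh) Ll.
rewrite L2_integral_sqrE // -EFinM -EFinD lee_fin.
exact: Rintegral_mul_le_diff_quot.
Unshelve. all: by end_near.
Qed.

End generator_L2.

Section Dirichlet_form.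
Context (R : realType) (d : measure_display) (T : measurableType d)
  (nu : probability T R) (P : R -> R.-pker T ~> T)
  (D : set (T -> R)) (L : (T -> R) -> (T -> R)).
Hypothesis P_stationary : forall t, 0 <= t -> forall A, measurable A ->
  (\int[nu]_x P t x A)%E = nu A.
Hypothesis L_generator : is_generator nu P D L.

Lemma D_lincomb a b f g : D f -> D g -> D (fun x => a * f x + b * g x).
Proof.
case: L_generator => gen gen_dom Df Dg.
have [Lf Llf cf] := gen f Df; have [Lg Llg cg] := gen g Dg.
apply: (gen_dom _ (fun x => a * L f x + b * L g x)); try exact: L2_lincomb.
exact: gen_conv_lincomb.
Qed.

(* [L] itself need not be linear (the generator only determines [L f] up to
   [nu]-null sets), but its pairings with [L2] functions are. *)
Lemma Rintegral_generator_lincomb a b f g k : D f -> D g -> L2 nu k ->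
  \int[nu]_x (L (fun y => a * f y + b * g y) x * k x) =
  a * \int[nu]_x (L f x * k x) + b * \int[nu]_x (L g x * k x).
Proof.
move=> Df Dg Lk; have [gen _] := L_generator.
have [Lf Llf cf] := gen f Df; have [Lg Llg cg] := gen g Dg.
have [Lh Llh ch] := gen _ (D_lincomb a b Df Dg).
rewrite (gen_conv_Rintegral_unique (l2 := fun x => a * L f x + b * L g x)
  Lh Llh _ Lk ch);
  [ | exact: L2_lincomb | exact: gen_conv_lincomb].
rewrite -Rintegral_lincomb; try exact: L2_integrable_mul.
by apply: eq_Rintegral => x _; ring.
Qed.

Lemma Dform_lincomb a b c e f g : D f -> D g ->
  Dform nu L (fun x => a * f x + b * g x) (fun x => c * f x + e * g x) =
  gram2 (Dform nu L f f) (Dform nu L f g) (Dform nu L g f) (Dform nu L g g)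
    a b c e.
Proof.
move=> Df Dg; have [gen _] := L_generator; rewrite /gram2.
have [Lf Llf _] := gen f Df; have [Lg Llg _] := gen g Dg.
rewrite /Dform Rintegral_generator_lincomb //; last exact: L2_lincomb.
have pair_lincomb h : L2 nu h -> \int[nu]_x (h x * (c * f x + e * g x)) =
    c * \int[nu]_x (h x * f x) + e * \int[nu]_x (h x * g x).
  move=> Lh; rewrite -Rintegral_lincomb; try exact: L2_integrable_mul.
  by apply: eq_Rintegral => x _; ring.
rewrite !pair_lincomb //; ring.
Qed.

Lemma Dform_ge0 h : D h -> 0 <= Dform nu L h h.
Proof.
case: L_generator => gen _ Dh; have [Lh Llh ch] := gen h Dh.
by rewrite /Dform oppr_ge0; exact (Rintegral_gen_conv_mul_le0 P_stationary Lh Llh ch).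
Qed.

End Dirichlet_form.

Section sector_constant.
Context (R : realType) (d : measure_display) (T : measurableType d)
  (nu : probability T R) (D : set (T -> R)) (L : (T -> R) -> (T -> R)).
Local Notation E := (Dform nu L).

Lemma Sect_ge s : (forall C, (forall u v, D u -> D v ->
    E u v <= C * Num.sqrt (E u u) * Num.sqrt (E v v)) -> s <= C) ->
  (s%:E <= Sect nu D L)%E.
Proof. by move=> s_le; apply/ereal_infP => _ [C hC <-]; rewrite lee_fin; exact: s_le. Qed.

Lemma Sect_ge_ratio u v : D u -> D v -> 0 < E u u -> 0 < E v v ->
  ((E u v / (Num.sqrt (E u u) * Num.sqrt (E v v)))%:E <= Sect nu D L)%E.
Proof.
move=> Du Dv uu_gt0 vv_gt0; apply: Sect_ge => C sector.
by rewrite ler_pdivrMr ?mulr_gt0 ?sqrtr_gt0 // mulrA sector.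
Qed.

Lemma Sect_eq_pinfty u v : D u -> D v -> E u u = 0 -> 0 < E u v ->
  Sect nu D L = +oo%E.
Proof.
move=> Du Dv uu0 uv_gt0.
rewrite /Sect (_ : [set C | _] = set0) ?image_set0 ?ereal_inf0 //.
apply/seteqP; split => // C /(_ u v Du Dv).
by rewrite uu0 sqrtr0 mulr0 mul0r leNgt uv_gt0.
Qed.

Lemma Sect_sqr_sub1_ge s : 0 <= s -> (s%:E <= Sect nu D L)%E ->
  ((s ^+ 2 - 1)%:E <= Sect nu D L * Sect nu D L - 1)%E.
Proof.
move=> s0; case: (Sect nu D L) => [r | | ] //.
  by rewrite lee_fin -EFinM -EFinB lee_fin => sr; nra.
by move=> _; rewrite mulyy leey.
Qed.

End sector_constant.

Section two_functions.
Context (R : realType) (d : measure_display) (T : measurableType d)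
  (nu : probability T R) (P : R -> R.-pker T ~> T)
  (D : set (T -> R)) (L : (T -> R) -> (T -> R)).
Hypothesis P_stationary : forall t, 0 <= t -> forall A, measurable A ->
  (\int[nu]_x P t x A)%E = nu A.
Hypothesis L_generator : is_generator nu P D L.
Variables (f g : T -> R).
Hypotheses (Df : D f) (Dg : D g).
Let E := Dform nu L.
Hypothesis Egg_gt0 : 0 < E g g.
Let Etil := (E f g + E g f) / 2.
Let Echk := (E f g - E g f) / 2.
Let Delta := E f f * E g g - Etil ^+ 2.

Let E_lincomb a b c e :
  E (fun x => a * f x + b * g x) (fun x => c * f x + e * g x) =
  gram2 (E f f) (E f g) (E g f) (E g g) a b c e.
Proof. exact: (Dform_lincomb P_stationary L_generator _ _ _ _ Df Dg). Qed.

Let D_span a b : D (fun x => a * f x + b * g x).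
Proof. exact (D_lincomb P_stationary L_generator a b Df Dg). Qed.

Let Egg_neq0 : E g g != 0. Proof. by rewrite gt_eqF. Qed.

Lemma Delta_ge0 : 0 <= Delta.
Proof.
have := Dform_ge0 P_stationary L_generator (D_span (E g g) (- Etil)).
by rewrite -/E E_lincomb gram2_Delta pmulr_rge0.
Qed.

Lemma Sect_sqr_sub1_ge_Delta : 0 < Delta ->
  ((Echk ^+ 2 / Delta)%:E <= Sect nu D L * Sect nu D L - 1)%E.
Proof.
move=> Delta_gt0; have Delta_neq0 : Delta != 0 by rewrite gt_eqF.
set K := 1 + Echk ^+ 2 / Delta.
have K_gt0 : 0 < K by rewrite ltr_wpDr // divr_ge0 ?sqr_ge0 // ltW.
set y := Echk * E g g / Delta.
have := Sect_ge_ratio (nu := nu) (L := L) (D_span y (1 - y * Etil / E g g))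
  (D_span 0 1).
rewrite -/E !E_lincomb gram2_witness // gram2_witness_g // gram2_gg -/K.
have -> : E g g * K / (Num.sqrt (E g g * K) * Num.sqrt (E g g)) = Num.sqrt K.
  rewrite sqrtrM ?ltW // -{1}(sqr_sqrtr (ltW Egg_gt0)) -{1}(sqr_sqrtr (ltW K_gt0)).
  by field; rewrite !gt_eqF ?sqrtr_gt0.
move=> /(_ (mulr_gt0 Egg_gt0 K_gt0) Egg_gt0) /(Sect_sqr_sub1_ge (sqrtr_ge0 _)).
by rewrite sqr_sqrtr ?(ltW K_gt0) // /K addrC addKr.
Qed.

Lemma Sect_eq_pinfty_Delta0 : 0 < Echk -> Delta = 0 -> Sect nu D L = +oo%E.
Proof.
move=> Echk_gt0 Delta0.
apply: (Sect_eq_pinfty (nu := nu) (L := L) (D_span 1 (- (Etil / E g g)))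
  (D_span 0 1)); rewrite -/E !E_lincomb.
  by rewrite gram2_proj // -/Delta Delta0 mul0r.
by rewrite gram2_proj_g.
Qed.

Lemma Sect_sqr_sub1_ge_degenerate : 0 < E f f * E g g -> 0 < Echk ->
  E f f * E g g = E f g * Etil ->
  ((Echk / Etil)%:E <= Sect nu D L * Sect nu D L - 1)%E.
Proof.
move=> FG_gt0 Echk_gt0 FG_eq.
have Delta_E : Delta = Echk * Etil by rewrite /Delta FG_eq /Echk /Etil; field.
have Etil_gt0 : 0 < Etil.
  rewrite lt_neqAle -(pmulr_rge0 _ Echk_gt0) -Delta_E Delta_ge0 andbT.
  by apply: contraTneq FG_gt0 => Etil0; rewrite FG_eq -Etil0 mulr0 ltxx.
have := Sect_sqr_sub1_ge_Delta; rewrite Delta_E => /(_ (mulr_gt0 Echk_gt0 Etil_gt0)).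
by rewrite expr2 -mulf_div divff ?mul1r // gt_eqF.
Qed.

End two_functions.

Theorem proposition3p7 (R : realType) (d : measure_display)
  (T : measurableType d) (nu : probability T R) (P : R -> R.-pker T ~> T)
  (D : set (T -> R)) (L : (T -> R) -> (T -> R))
  (hP : markov_semigroup nu P) (hL : is_generator nu P D L)
  (f g : T -> R) (hf : D f) (hg : D g) :
  let E := Dform nu L in
  let Etil := (E f g + E g f) / 2 in
  let Echk := (E f g - E g f) / 2 in
  let Delta := E f f * E g g - Etil ^+ 2 in
  0 < E f f * E g g -> 0 < Echk ->
  0 <= Delta /\
  (E f f * E g g != E f g * Etil -> 0 < Delta ->
     ((Echk ^+ 2 / Delta)%:E <= Sect nu D L * Sect nu D L - 1)%E) /\
  (E f f * E g g != E f g * Etil -> Delta = 0 -> Sect nu D L = +oo%E) /\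
  (E f f * E g g = E f g * Etil ->
     ((Echk / Etil)%:E <= Sect nu D L * Sect nu D L - 1)%E).
Proof.
move=> E Etil Echk Delta; rewrite /Delta /Echk /Etil /E.
move=> FG_gt0 Echk_gt0.
have P_stationary : forall t, 0 <= t -> forall A, measurable A ->
    (\int[nu]_x P t x A)%E = nu A by case: hP.
have Egg_gt0 : 0 < E g g.
  have := Dform_ge0 P_stationary hL hf; have := Dform_ge0 P_stationary hL hg.
  by move: FG_gt0; nra.
split; first exact (Delta_ge0 P_stationary hL hf hg Egg_gt0).
split=> [_ | ].
  exact (Sect_sqr_sub1_ge_Delta P_stationary hL hf hg Egg_gt0).
split=> [_ | ].
  exact (Sect_eq_pinfty_Delta0 P_stationary hL hf hg Egg_gt0 Echk_gt0).
exact (Sect_sqr_sub1_ge_degenerate P_stationary hL hf hg Egg_gt0 FG_gt0 Echk_gt0).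
Qed.
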